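(* Consider the Normal Partizan Domination game on the star $K_{1,n}$ ($n\geq 1$) in which every vertex has color $C$. Its value is $*$ if $n$ is odd and $*2$ if $n$ is even.
   Context: Normal Partizan Domination game: a finite graph $G$ has each vertex colored $A$, $B$ or $C$. Alice and Bob alternately select a vertex; Alice may only select vertices colored $A$ or $C$, Bob only vertices colored $B$ or $C$. A vertex $u$ dominates $v$ if $u=v$ or $uv$ is an edge. A vertex may be selected only if it is playable, i.e. it dominates at least one vertex not dominated by the previously selected vertices; the game ends when the selected vertices form a dominating set. Under normal play the player unable to move loses. The game is regarded as a partizan combinatorial game with Alice as Left and Bob as Right, and its value is its value in Conway's combinatorial game theory ($\{X\mid Y\}$ has Left options $X$ and Right options $Y$; $G=H$ iff $G+(-H)$ is a second-player win). Nimbers: $*=\{0\mid 0\}$, $*2=\{0,*\mid 0,*\}$. *)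

From mathcomp Require Import all_boot.
Set Implicit Arguments.
Unset Strict Implicit.
Unset Printing Implicit Defensive.

Inductive game : Type := Game of seq game & seq game.

Definition lopts (g : game) := let: Game l _ := g in l.
Definition ropts (g : game) := let: Game _ r := g in r.

Fixpoint gadd (g : game) : game -> game :=
  fix gaddg (h : game) : game :=
    match g, h with
    | Game gl gr, Game hl hr =>
        Game ([seq gadd g' h | g' <- gl] ++ [seq gaddg h' | h' <- hl])
             ([seq gadd g' h | g' <- gr] ++ [seq gaddg h' | h' <- hr])
    end.

Fixpoint gneg (g : game) : game :=
  match g with Game l r => Game [seq gneg x | x <- r] [seq gneg x | x <- l] end.

Fixpoint gwins (g : game) : bool * bool :=
  match g with
  | Game l r => (has (fun x => ~~ (gwins x).2) l, has (fun x => ~~ (gwins x).1) r)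
  end.

Definition left_wins_first (g : game) : bool := (gwins g).1.
Definition right_wins_first (g : game) : bool := (gwins g).2.

Definition second_player_win (g : game) : bool :=
  ~~ left_wins_first g && ~~ right_wins_first g.

Definition game_eq (g h : game) : Prop := second_player_win (gadd g (gneg h)).

Definition gzero : game := Game [::] [::].
Definition gstar : game := Game [:: gzero] [:: gzero].
Definition gstar2 : game := Game [:: gzero; gstar] [:: gzero; gstar].

Inductive color := colA | colB | colC.

Section Domination.
Variable V : finType.
Variable adj : rel V.
Variable col : V -> color.

Definition closed_nbhd (u : V) : {set V} := [set v | (u == v) || adj u v].

Definition dominated (S : {set V}) : {set V} := \bigcup_(u in S) closed_nbhd u.

Definition playable (S : {set V}) (v : V) : bool :=
  ~~ (closed_nbhd v \subset dominated S).

Definition alice_may (v : V) : bool := if col v is colB then false else true.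
Definition bob_may (v : V) : bool := if col v is colA then false else true.

(* game tree from the position where the set S has been selected; the fuel
   bounds the number of remaining moves (each move dominates a new vertex) *)
Fixpoint dom_pos (fuel : nat) (S : {set V}) : game :=
  match fuel with
  | 0 => gzero
  | k.+1 =>
      Game [seq dom_pos k (v |: S) | v <- enum V & alice_may v && playable S v]
           [seq dom_pos k (v |: S) | v <- enum V & bob_may v && playable S v]
  end.

Definition domination_game : game := dom_pos #|V|.+1 set0.
End Domination.

Definition star_adj (n : nat) : rel 'I_n.+1 :=
  fun u v => (u != v) && ((val u == 0) || (val v == 0)).
Arguments star_adj n : clear implicits.

(* When every vertex has colour C, Left and Right have the same options in
   every position, so positions can be measured by nim values computed with
   the mex rule, as in Sprague-Grundy theory. A sum of games with nim values
   a and b is a first-player win exactly when a <> b, hence games with equal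
   nim values are equal. On the star, a position where the centre is free and
   k leaves are free has value 0 if k = 0 and mex {0, value (k - 1)} otherwise,
   since taking the centre ends the game and taking a leaf frees one leaf
   less; this is 1 for odd k and 2 for even k > 0. *)

From HB Require Import structures.
From mathcomp Require Import all_boot.

Set Implicit Arguments.
Unset Strict Implicit.
Unset Printing Implicit Defensive.

Fixpoint tree_of_game (g : game) : GenTree.tree nat :=
  let: Game l r := g in
  GenTree.Node 0 [:: GenTree.Node 0 (map tree_of_game l);
                     GenTree.Node 0 (map tree_of_game r)].

Fixpoint game_of_tree (t : GenTree.tree nat) : game :=
  if t is GenTree.Node _ [:: GenTree.Node _ l; GenTree.Node _ r]
  then Game (map game_of_tree l) (map game_of_tree r) else gzero.

Lemma tree_of_gameK : cancel tree_of_game game_of_tree.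
Proof.
rewrite /cancel; fix IH 1 => -[l r] /=; rewrite -!map_comp.
by congr Game; [elim: l | elim: r] => //= x s ->; rewrite IH.
Qed.

HB.instance Definition _ := Equality.copy game (can_type tree_of_gameK).

Lemma game_opts_ind (P : game -> Prop) :
  (forall l r, {in l, forall x, P x} -> {in r, forall x, P x} -> P (Game l r)) ->
  forall g, P g.
Proof.
move=> IHg; fix IH 1 => -[l r].
apply: IHg; [move: l | move: r]; (elim=> [|y s IHs] x;
  [rewrite in_nil => /notF [] | rewrite inE => /predU1P[->|/IHs //]; exact: IH]).
Qed.

Definition mex_options (val : game -> nat -> Prop) (s : seq game) (a : nat) :=
  {in s, forall x, exists2 b, val x b & b != a} /\
  (forall b, b < a -> exists2 x, x \in s & val x b).

(* [nim_value g a]: g equals the nimber *a, as witnessed by the mex rule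
   applied to the options of each player. *)
Inductive nim_value : game -> nat -> Prop :=
  NimValue l r a : mex_options nim_value l a -> mex_options nim_value r a ->
                   nim_value (Game l r) a.

Lemma nim_valueE l r a :
  nim_value (Game l r) a <-> mex_options nim_value l a /\ mex_options nim_value r a.
Proof. by split=> [vg | [? ?]]; [inversion vg | constructor]. Qed.

Lemma gaddE gl gr hl hr :
  gadd (Game gl gr) (Game hl hr) =
  Game ([seq gadd x (Game hl hr) | x <- gl] ++ [seq gadd (Game gl gr) y | y <- hl])
       ([seq gadd x (Game hl hr) | x <- gr] ++ [seq gadd (Game gl gr) y | y <- hr]).
Proof. by []. Qed.

Lemma gwinsE l r :
  gwins (Game l r) = (has (fun x => ~~ (gwins x).2) l, has (fun x => ~~ (gwins x).1) r).
Proof. by []. Qed.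

Lemma has_nim_sum_move (p : pred game) G H gs hs a b :
  mex_options nim_value gs a -> mex_options nim_value hs b ->
  (forall x c, x \in gs -> nim_value x c -> p (gadd x H) = (c == b)) ->
  (forall y d, y \in hs -> nim_value y d -> p (gadd G y) = (a == d)) ->
  has p ([seq gadd x H | x <- gs] ++ [seq gadd G y | y <- hs]) = (a != b).
Proof.
move=> [gs_val gs_mex] [hs_val hs_mex] p_gs p_hs; rewrite has_cat !has_map.
case: ltngtP => [lt_ab | lt_ba | eq_ab].
- have [y hs_y y_a] := hs_mex a lt_ab.
  by apply/orP; right; apply/hasP; exists y; rewrite //= (p_hs y a).
- have [x gs_x x_b] := gs_mex b lt_ba.
  by apply/orP; left; apply/hasP; exists x; rewrite //= (p_gs x b).
subst b; apply/negbTE; rewrite negb_or; apply/andP; split; apply/hasPn.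
- by move=> x gs_x /=; have [c x_c] := gs_val x gs_x; rewrite (p_gs x c).
by move=> y hs_y /=; have [d y_d] := hs_val y hs_y; rewrite (p_hs y d) // eq_sym.
Qed.

Lemma nim_value_gadd g h a b :
  nim_value g a -> nim_value h b -> gwins (gadd g h) = (a != b, a != b).
Proof.
elim/game_opts_ind: g a h b => gl gr IHgl IHgr a h b vg.
elim/game_opts_ind: h b vg => hl hr IHhl IHhr b vg vh.
have [gl_a gr_a] := (nim_valueE gl gr a).1 vg.
have [hl_b hr_b] := (nim_valueE hl hr b).1 vh.
rewrite gaddE gwinsE; congr pair; apply: has_nim_sum_move => //.
- by move=> x c gl_x x_c /=; rewrite (IHgl x gl_x c _ b) ?negbK.
- by move=> y d hl_y y_d /=; rewrite (IHhl y hl_y d) ?negbK.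
- by move=> x c gr_x x_c /=; rewrite (IHgr x gr_x c _ b) ?negbK.
by move=> y d hr_y y_d /=; rewrite (IHhr y hr_y d) ?negbK.
Qed.

Lemma mex_options_map (F : game -> game) s a :
  (forall x c, x \in s -> nim_value x c -> nim_value (F x) c) ->
  mex_options nim_value s a -> mex_options nim_value (map F s) a.
Proof.
move=> F_val [s_val s_mex]; split=> [_ /mapP[x s_x ->] | b /s_mex[x s_x x_b]].
  by have [c x_c c_a] := s_val x s_x; exists c; first exact: F_val.
by exists (F x); [exact: map_f | exact: F_val].
Qed.

Lemma nim_value_gneg g a : nim_value g a -> nim_value (gneg g) a.
Proof.
elim/game_opts_ind: g a => l r IHl IHr a /nim_valueE[l_a r_a].
by apply/nim_valueE; split; apply: mex_options_map => // x c;
  [move/IHr | move/IHl]; apply.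
Qed.

Lemma nim_value_game_eq g h a : nim_value g a -> nim_value h a -> game_eq g h.
Proof.
move=> g_a /nim_value_gneg h_a.
by rewrite /game_eq /second_player_win /left_wins_first /right_wins_first
  (nim_value_gadd g_a h_a) eqxx.
Qed.

Lemma nim_value0 : nim_value gzero 0.
Proof. by constructor; split. Qed.

Lemma nim_value_star : nim_value gstar 1.
Proof.
have opts : mex_options nim_value [:: gzero] 1.
  split=> [x | [|//] _]; last by exists gzero; [rewrite inE | exact: nim_value0].
  by rewrite inE => /eqP->; exists 0; first exact: nim_value0.
by constructor.
Qed.

Lemma nim_value_star2 : nim_value gstar2 2.
Proof.
have opts : mex_options nim_value [:: gzero; gstar] 2.
  split=> [x | [|[|//]] _].
  - by rewrite !inE => /orP[] /eqP->; [exists 0; first exact: nim_value0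
                                      | exists 1; first exact: nim_value_star].
  - by exists gzero; [rewrite inE eqxx | exact: nim_value0].
  by exists gstar; [rewrite !inE eqxx orbT | exact: nim_value_star].
by constructor.
Qed.

Section Domination.
Variables (V : finType) (adj : rel V).

Lemma mem_dominated S w :
  (w \in dominated adj S) = [exists u in S, w \in closed_nbhd adj u].
Proof. by apply/bigcupP/exists_inP => -[u S_u nbhd_w]; exists u. Qed.

Lemma dom_pos_dominated col f S :
  (forall v, ~~ playable adj S v) -> dom_pos adj col f S = gzero.
Proof.
move=> unplayable; case: f => [//|f].
have no_move (may : pred V) : [seq v <- enum V | may v && playable adj S v] = [::].
  rewrite -(filter_pred0 (enum V)); apply: eq_filter => v.
  by rewrite (negbTE (unplayable v)) andbF.
by rewrite /= !no_move.
Qed.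

Local Notation D := (dom_pos adj (fun=> colC)).

Lemma nim_value_dom_posC f S a :
  (forall v, playable adj S v -> exists2 b, nim_value (D f (v |: S)) b & b != a) ->
  (forall b, b < a -> exists2 v, playable adj S v & nim_value (D f (v |: S)) b) ->
  nim_value (D f.+1 S) a.
Proof.
move=> move_val move_mex.
have opts : mex_options nim_value [seq D f (v |: S) | v <- enum V & playable adj S v] a.
  split=> [x /mapP[v] | b /move_mex[v play_v v_b]].
    by rewrite mem_filter => /andP[play_v _] ->; apply: move_val.
  exists (D f (v |: S)) => //.
  by apply/mapP; exists v; rewrite // mem_filter play_v mem_enum.
by constructor.
Qed.

End Domination.

Section Star.
Variable n : nat.
Hypothesis n_gt0 : 0 < n.
Implicit Types (S : {set 'I_n.+1}) (u v w : 'I_n.+1).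

Local Notation centre := (ord0 : 'I_n.+1).
Local Notation playable := (playable (star_adj n)).
Local Notation dominated := (dominated (star_adj n)).

Lemma star_closed_nbhd u w :
  (w \in closed_nbhd (star_adj n) u) = [|| u == w, u == centre | w == centre].
Proof. by rewrite inE /star_adj; case: eqP. Qed.

Lemma star_dominated_centre_in S w : centre \in S -> w \in dominated S.
Proof.
by move=> S_c; rewrite mem_dominated; apply/exists_inP; exists centre;
  rewrite // star_closed_nbhd eqxx orbT.
Qed.

Lemma star_dominated_centre S u : u \in S -> centre \in dominated S.
Proof.
by move=> S_u; rewrite mem_dominated; apply/exists_inP; exists u;
  rewrite // star_closed_nbhd eqxx !orbT.
Qed.

Lemma star_dominated_leaf S w :
  centre \notin S -> w != centre -> (w \in dominated S) = (w \in S).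
Proof.
move=> S'c w'c; rewrite mem_dominated.
apply/exists_inP/idP => [[u S_u] | S_w];
  last by exists w; rewrite // star_closed_nbhd eqxx.
rewrite star_closed_nbhd (negbTE w'c) orbF => /orP[/eqP<- // | /eqP u_c].
by rewrite -u_c S_u in S'c.
Qed.

Lemma star_unplayable_centre_in S v : centre \in S -> ~~ playable S v.
Proof.
by move=> S_c; rewrite negbK; apply/subsetP => w _; apply: star_dominated_centre_in.
Qed.

Lemma star_playable_leaf S v :
  centre \notin S -> v != centre -> playable S v = (v \notin S).
Proof.
move=> S'c v'c; congr negb; apply/subsetP/idP => [nbhd_dom | S_v w].
  by rewrite -(star_dominated_leaf S'c v'c) nbhd_dom // star_closed_nbhd eqxx.
rewrite star_closed_nbhd => /or3P[/eqP<- | /eqP v_c | /eqP->].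
- by rewrite star_dominated_leaf.
- by rewrite v_c eqxx in v'c.
exact: star_dominated_centre S_v.
Qed.

Lemma star_playable_centre S v :
  centre \notin S -> v != centre -> v \notin S -> playable S centre.
Proof.
move=> S'c v'c S'v; apply/subsetPn; exists v; first by rewrite star_closed_nbhd eqxx orbT.
by rewrite star_dominated_leaf.
Qed.

Lemma star_unplayable_leaves_in S v : ~: S = [set centre] -> ~~ playable S v.
Proof.
move=> S'_c; have S_leaf u : u != centre -> u \in S.
  by move=> u'c; rewrite -[u \in S]negbK -in_setC S'_c in_set1.
rewrite negbK; apply/subsetP => w _; case: (eqVneq w centre) => [-> | w'c].
  apply: (@star_dominated_centre _ ord_max); apply: S_leaf.
  by rewrite -val_eqE /= -lt0n.
rewrite mem_dominated; apply/exists_inP; exists w; first exact: S_leaf.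
by rewrite star_closed_nbhd eqxx.
Qed.

Definition star_nim k := if k == 0 then 0 else if odd k then 1 else 2.

Lemma star_nimS_neq k : (star_nim k.+1 != 0) && (star_nim k.+1 != star_nim k).
Proof. by case: k => [|k]; rewrite /star_nim //=; case: odd. Qed.

Lemma star_nimS_lt k b : b < star_nim k.+1 -> b = 0 \/ b = star_nim k.
Proof.
move: b; case: k => [|k]; rewrite /star_nim /=; last case: (odd k).
all: by move=> -[|[|[|b]]]; auto.
Qed.

Local Notation D := (dom_pos (star_adj n) (fun=> colC)).

Lemma nim_value_star_pos k f S :
  centre \notin S -> #|~: S| = k.+1 -> k < f -> nim_value (D f S) (star_nim k).
Proof.
elim: k f S => [|k IHk] f S S'c card_S lt_kf.
  rewrite dom_pos_dominated; first exact: nim_value0.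
  move=> v; apply: star_unplayable_leaves_in; apply/eqP.
  by rewrite eq_sym eqEcard sub1set in_setC S'c cards1 card_S.
case: f lt_kf => // f lt_kf.
have /card_gt0P[v] : 0 < #|~: S :\ centre|.
  by move: card_S; rewrite (cardsD1 centre) in_setC S'c add1n => -[->].
rewrite in_setD1 in_setC => /andP[v'c S'v].
have centre_move : nim_value (D f (centre |: S)) 0.
  rewrite dom_pos_dominated ?nim_value0 // => u.
  by apply: star_unplayable_centre_in; rewrite setU11.
have leaf_move u : u != centre -> u \notin S -> nim_value (D f (u |: S)) (star_nim k).
  move=> u'c S'u; apply: IHk => //; first by rewrite in_setU1 eq_sym (negbTE u'c).
  have -> : ~: (u |: S) = ~: S :\ u by rewrite setDE setCU setIC.
  by move: card_S; rewrite (cardsD1 u) in_setC S'u add1n => -[].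
have /andP[nim_gt0 nim_neq] := star_nimS_neq k.
apply: nim_value_dom_posC => [u play_u | b /star_nimS_lt[->|->]].
- have [-> | u'c] := eqVneq u centre; first by exists 0; rewrite // eq_sym.
  move: play_u; rewrite star_playable_leaf // => S'u.
  by exists (star_nim k); [exact: leaf_move | rewrite eq_sym].
- by exists centre; first exact: star_playable_centre S'c v'c S'v.
by exists v; [rewrite star_playable_leaf | exact: leaf_move].
Qed.

End Star.

Theorem theorem5 (n : nat) (hn : 1 <= n) :
  game_eq (domination_game (star_adj n) (fun _ => colC))
          (if odd n then gstar else gstar2).
Proof.
have star_val : nim_value (domination_game (star_adj n) (fun=> colC)) (star_nim n).
  rewrite /domination_game card_ord; apply: nim_value_star_pos => //.
  - by rewrite in_set0.
  by rewrite setC0 cardsT card_ord.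
apply: (nim_value_game_eq star_val); rewrite /star_nim eqn0Ngt hn.
by case: odd; [exact: nim_value_star | exact: nim_value_star2].
Qed.
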